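(* Consider an attack graph $G=(V,\mathcal{E})$ with source $v_s$ and a single non-behavioral defender with budget $B\ge0$, whose feasible investments are $X=\{x\in\mathbb{R}^{|\mathcal{E}|}_{\ge 0}:\mathbf{1}^Tx\le B\}$. Let the attack success probability on each edge be $p_{i,j}(x_{i,j})=e^{-x_{i,j}}$. Suppose there is a single target asset $v_t$ (reachable from $v_s$) with loss $L_t\ge0$, all other assets having loss $0$, so that the defender's (true) expected cost is $$\hat C(x)=L_t\max_{P\in\mathcal{P}_t}\prod_{(v_i,v_j)\in P}e^{-x_{i,j}}.$$ Let $\mathcal{E}_c\subseteq\mathcal{E}$ be a min-cut between $v_s$ and $v_t$, with $N=|\mathcal{E}_c|$. Then the investment that places $B/N$ on each edge of $\mathcal{E}_c$ and $0$ on every other edge minimizes $\hat C$ over $X$; i.e., it is optimal for the defender to distribute all of her budget equally only on the edges of $\mathcal{E}_c$.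
   Context: An attack graph is a finite directed graph with a designated source node $v_s$. $\mathcal{P}_t$ is the set of directed paths from $v_s$ to $v_t$ (viewed as sets of edges). An edge-cut between $v_s$ and $v_t$ is a set of edges whose removal destroys all directed paths from $v_s$ to $v_t$; a min-cut is an edge-cut of minimum cardinality. *)

From HB Require Import structures.
From mathcomp Require Import all_boot all_order all_algebra.
From mathcomp Require Import reals.
From mathcomp Require Import sequences exp.
Set Implicit Arguments. Unset Strict Implicit. Unset Printing Implicit Defensive.
Import Order.TTheory GRing.Theory Num.Theory.
Local Open Scope ring_scope.

Section AttackGraph.
Variable V : finType.

Definition is_path (E : {set V * V}) (vs vt : V) (p : seq V) : bool :=
  [&& path (fun u v => (u, v) \in E) vs p, last vs p == vt & uniq (vs :: p)].

Definition path_edges (vs : V) (p : seq V) : seq (V * V) := zip (vs :: p) p.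

Definition edge_cut (E C : {set V * V}) (vs vt : V) : Prop :=
  C \subset E /\ forall p, ~~ is_path (E :\: C) vs vt p.

Definition min_cut (E C : {set V * V}) (vs vt : V) : Prop :=
  edge_cut E C vs vt /\ forall C', edge_cut E C' vs vt -> (#|C| <= #|C'|)%N.

Variable R : realType.

Definition feasible (E : {set V * V}) (B : R) (x : V * V -> R) : Prop :=
  (forall e, e \in E -> 0 <= x e) /\ \sum_(e in E) x e <= B.

Definition path_prob (x : V * V -> R) (vs : V) (p : seq V) : R :=
  \prod_(e <- path_edges vs p) expR (- x e).

(* A simple path has at most #|V| - 1 further vertices, so the maximum ranges
   over tuples of length k < #|V|; all terms are positive, so 0 is a neutral
   default for the (nonempty, by reachability) maximum. *)
Definition cost (E : {set V * V}) (vs vt : V) (Lt : R) (x : V * V -> R) : R :=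
  Lt * \big[Num.max/0]_(k < #|V|)
         \big[Num.max/0]_(t : k.-tuple V | is_path E vs vt t) path_prob x vs t.

End AttackGraph.

(* Under the uniform investment every v_s-v_t path crosses the min-cut E_c, so
   every path succeeds with probability at most exp(-B/N).  Conversely, let d be
   the shortest-path distance from v_s for the edge lengths x.  For every level
   a in [d v_s, d v_t) the edges going from {d <= a} to {d > a} form an edge cut,
   hence number at least N; summing over the levels gives
   N d(v_t) <= sum_e max(0, d(head e) - d(tail e)) <= sum_e x_e <= B,
   so some path succeeds with probability at least exp(-B/N). *)

From HB Require Import structures.
From mathcomp Require Import all_boot all_order all_algebra.
From mathcomp Require Import reals lra.
From mathcomp Require Import sequences exp.
Set Implicit Arguments. Unset Strict Implicit. Unset Printing Implicit Defensive.
Import Order.TTheory GRing.Theory Num.Theory.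
Local Open Scope ring_scope.

Section Paths.
Variable V : finType.

Lemma path_all_edges (r : rel V) u p :
  path r u p = all (fun e => r e.1 e.2) (path_edges u p).
Proof. by elim: p u => [|w p IH] u //=; rewrite IH. Qed.

Lemma path_edges_cat (u : V) p1 p2 :
  path_edges u (p1 ++ p2) = path_edges u p1 ++ path_edges (last u p1) p2.
Proof. by elim: p1 u => [|w p IH] u //=; rewrite -IH. Qed.

Lemma path_exit (r : rel V) (P : pred V) u p :
  path r u p -> P u -> ~~ P (last u p) -> exists u' v', [/\ r u' v', P u' & ~~ P v'].
Proof.
elim: p u => [|w p IH] u /=; first by move=> _ ->.
case/andP=> ruw pw Pu nP; case Pw: (P w); first exact: IH pw Pw nP.
by exists u, w; rewrite ruw Pu Pw.
Qed.

Lemma is_path_size (E : {set V * V}) vs v p : is_path E vs v p -> (size p < #|V|)%N.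
Proof.
case/and3P=> _ _ uniq_p; have := max_card (mem (vs :: p)).
by rewrite (card_uniqP uniq_p).
Qed.

Lemma is_path_prefix (E : {set V * V}) vs v p1 p2 :
  is_path E vs v (p1 ++ p2) -> is_path E vs (last vs p1) p1.
Proof.
case/and3P; rewrite cat_path -cat_cons cat_uniq => /andP[pp1 _] _ /andP[uniq_p1 _].
by rewrite /is_path pp1 eqxx uniq_p1.
Qed.

Lemma is_path_rcons (E : {set V * V}) vs u v p :
  is_path E vs u p -> (u, v) \in E -> v \notin vs :: p -> is_path E vs v (rcons p v).
Proof.
case/and3P=> pp /eqP last_p uniq_p uv_E v_new.
rewrite /is_path rcons_path pp last_p uv_E last_rcons eqxx.
by rewrite -rcons_cons rcons_uniq v_new.
Qed.

Lemma edge_cut_meets_path (E C : {set V * V}) vs vt p :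
  edge_cut E C vs vt -> is_path E vs vt p -> exists2 e, e \in path_edges vs p & e \in C.
Proof.
case=> _ cutC /and3P[+ last_p uniq_p]; rewrite path_all_edges => /allP pE.
apply/hasP/negPn/negP => /hasPn avoidC; have /negP := cutC p; apply.
rewrite /is_path last_p uniq_p !andbT path_all_edges; apply/allP => e e_p.
rewrite inE pE // andbT -surjective_pairing; exact: avoidC.
Qed.

End Paths.

Section CutPotential.
Variables (V : finType) (R : realType) (E : {set V * V}) (vs vt : V).

Definition upcrossing (f : V -> R) (a : R) : {set V * V} :=
  [set e in E | (f e.1 <= a) && (a < f e.2)].

Lemma upcrossing_edge_cut f a :
  f vs <= a -> a < f vt -> edge_cut E (upcrossing f a) vs vt.
Proof.
move=> f_vs f_vt; split; first by apply/subsetP => e; rewrite inE => /andP[].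
move=> p; apply/negP => /and3P[pp /eqP last_p _].
have f_vt_high : ~~ (f (last vs p) <= a) by rewrite last_p -ltNge.
have [u [v [uv_E fu fv]]] := path_exit (P := fun v => f v <= a) pp f_vs f_vt_high.
move: uv_E fv; rewrite !inE fu -ltNge /= => /andP[/negP not_crossing uv_E] fv.
by apply: not_crossing; rewrite uv_E fv.
Qed.

Lemma clamp_rise_le (a c fu fv : R) :
  a < c -> (a < fu -> c <= fu) -> (a < fv -> c <= fv) ->
  Num.max 0 (Num.max fv c - Num.max fu c) + (if (fu <= a) && (a < fv) then c - a else 0)
  <= Num.max 0 (fv - fu).
Proof.
move=> ac cu cv; case: (leP fu a) => hu; case: (ltP a fv) => hv /=.
- have := cv hv; rewrite !maxEle; repeat case: ifP; move=> *; lra.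
- rewrite !maxEle; repeat case: ifP; move=> *; lra.
- have := cu hu; have := cv hv; rewrite !maxEle; repeat case: ifP; move=> *; lra.
- have := cu hu; rewrite !maxEle; repeat case: ifP; move=> *; lra.
Qed.

Lemma sum_clamp_rise_le (f : V -> R) a c : a < c -> (forall v, a < f v -> c <= f v) ->
  \sum_(e in E) Num.max 0 (Num.max (f e.2) c - Num.max (f e.1) c)
    + (c - a) *+ #|upcrossing f a|
  <= \sum_(e in E) Num.max 0 (f e.2 - f e.1).
Proof.
move=> ac gap; rewrite -sumr_const.
have -> : \sum_(e in upcrossing f a) (c - a) =
    \sum_(e in E) (if (f e.1 <= a) && (a < f e.2) then c - a else 0).
  by rewrite -big_mkcondr; apply: eq_bigl => e; rewrite inE.
by rewrite -big_split; apply: ler_sum => e _; exact: clamp_rise_le ac (gap _) (gap _).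
Qed.

Variable N : nat.
Hypothesis cuts_ge : forall C, edge_cut E C vs vt -> (N <= #|C|)%N.

Lemma mincut_potential_bound (f : V -> R) :
  N%:R * (f vt - f vs) <= \sum_(e in E) Num.max 0 (f e.2 - f e.1).
Proof.
have [k] := ubnP #|[set v | f vs < f v]|; elim: k f => // k IH f.
rewrite ltnS => card_f; have [f_vt|f_vs_vt] := leP (f vt) (f vs).
  apply: le_trans (sumr_ge0 _ _) => [|e _]; last by rewrite le_max lexx.
  by rewrite mulr_ge0_le0 // subr_le0.
set a := f vs.
have [w a_fw gap] := @arg_minP _ _ _ vt (fun v => a < f v) f f_vs_vt.
set c := f w.
(* Raise f to c, the next value above f vs: all levels in [f vs, c) share the
   cut [upcrossing f a], and g has one level fewer. *)
pose g v := Num.max (f v) c.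
have g_vs : g vs = c by rewrite /g max_r // ltW.
have g_vt : g vt = f vt by rewrite /g max_l // gap.
have card_g : (#|[set v | (g vs < g v)%R]| < k)%N.
  apply: leq_trans card_f; apply: proper_card; apply/properP; split.
    by apply/subsetP => v; rewrite !inE g_vs /g lt_max ltxx orbF; apply: lt_trans.
  by exists w; rewrite !inE // g_vs /g lt_max ltxx.
have := IH g card_g; rewrite g_vs g_vt => IHg.
have cut_size := cuts_ge (@upcrossing_edge_cut f a (lexx a) f_vs_vt).
apply: le_trans (sum_clamp_rise_le a_fw gap).
have -> : f vt - a = (f vt - c) + (c - a) by rewrite addrA subrK.
by rewrite mulrDr lerD // mulrC mulr_natr ler_wpMn2l // subr_ge0 ltW.
Qed.

End CutPotential.

Section ShortestPaths.
Variables (V : finType) (R : realType) (E : {set V * V}) (vs : V) (x : V * V -> R).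

Definition path_len (u : V) (p : seq V) : R := \sum_(e <- path_edges u p) x e.

Lemma path_prob_len u p : path_prob x u p = expR (- path_len u p).
Proof.
rewrite /path_prob /path_len; elim: (path_edges u p) => [|e s IH].
  by rewrite !big_nil oppr0 expR0.
by rewrite !big_cons IH opprD expRD.
Qed.

Lemma path_len_cat u p1 p2 :
  path_len u (p1 ++ p2) = path_len u p1 + path_len (last u p1) p2.
Proof. by rewrite /path_len path_edges_cat big_cat. Qed.

Lemma path_len_ge_edge u p e :
  (forall e', 0 <= x e') -> e \in path_edges u p -> x e <= path_len u p.
Proof.
move=> x_ge0 e_p; rewrite /path_len (big_rem _ e_p) /= lerDl.
by apply: sumr_ge0 => e' _.
Qed.

Hypothesis x_ge0 : forall e, e \in E -> 0 <= x e.

Lemma path_len_ge0 u p : path (fun u v => (u, v) \in E) u p -> 0 <= path_len u p.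
Proof.
rewrite path_all_edges => /allP pE; rewrite /path_len big_seq sumr_ge0 // => e e_p.
by rewrite x_ge0 // [e]surjective_pairing pE.
Qed.

Section Dist.
(* [T] is the value at the vertices that no simple path from [vs] reaches. *)
Variable T : R.

Definition path_dist (v : V) : R :=
  \big[Num.min/T]_(k < #|V|)
    \big[Num.min/T]_(t : k.-tuple V | is_path E vs v t) path_len vs t.

Lemma path_dist_le_len v p : is_path E vs v p -> path_dist v <= path_len vs p.
Proof.
move=> pv; apply: (bigmin_inf (Ordinal (is_path_size pv))) => //.
exact: (@bigmin_le_cond _ _ _ T (in_tuple p) _ _ pv).
Qed.

Lemma path_dist_le_default v : path_dist v <= T.
Proof. exact: bigmin_le_id. Qed.

Lemma path_dist_cases v :
  path_dist v = T \/ exists2 p, is_path E vs v p & path_len vs p = path_dist v.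
Proof.
pose attained y := y = T \/ exists2 p, is_path E vs v p & path_len vs p = y.
have attained_min y z : attained y -> attained z -> attained (Num.min y z).
  by move=> ay az; case: leP.
apply: (big_ind attained); [by left | exact: attained_min | move=> k _].
apply: (big_ind attained); [by left | exact: attained_min | move=> t pt].
by right; exists t.
Qed.

Lemma path_dist_edge u v : (u, v) \in E -> path_dist v <= path_dist u + x (u, v).
Proof.
move=> uv_E; have x_uv := x_ge0 uv_E.
case: (path_dist_cases u) => [->|[p pu <-]].
  by apply: le_trans (path_dist_le_default v) _; rewrite lerDl.
case: (boolP (v \in vs :: p)) => [v_p|v_new].
  case/splitPl: v_p pu => p1 p2 last_p1 pu.
  have := path_dist_le_len (is_path_prefix pu); rewrite last_p1 => /le_trans; apply.
  case/and3P: pu; rewrite cat_path => /andP[_ pp2] _ _.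
  by rewrite path_len_cat -addrA lerDl addr_ge0 // path_len_ge0.
apply: le_trans (path_dist_le_len (is_path_rcons pu uv_E v_new)) _.
case/and3P: pu => _ /eqP last_p _.
by rewrite -cats1 path_len_cat last_p /path_len big_cons big_nil addr0.
Qed.

End Dist.

Lemma short_path_exists vt N p0 : is_path E vs vt p0 ->
    (forall C, edge_cut E C vs vt -> (N <= #|C|)%N) ->
  exists2 p, is_path E vs vt p & N%:R * path_len vs p <= \sum_(e in E) x e.
Proof.
move=> p0_path cuts_ge; pose d := path_dist (path_len vs p0).
have d_attained : exists2 p, is_path E vs vt p & path_len vs p = d vt.
  by case: (path_dist_cases (path_len vs p0) vt) => [d_vt|//]; exists p0.
have [p p_path len_p] := d_attained; exists p => //; rewrite len_p.
have d_vs : d vs <= 0.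
  have nil_path : is_path E vs vs [::] by rewrite /is_path /= eqxx.
  by have := path_dist_le_len (path_len vs p0) nil_path; rewrite /path_len big_nil.
apply: le_trans (le_trans (mincut_potential_bound cuts_ge d) _).
  by rewrite ler_wpM2l // lerDl oppr_ge0.
apply: ler_sum => -[u v] uv_E /=; rewrite ge_max x_ge0 //= lerBlDl.
exact: path_dist_edge.
Qed.

End ShortestPaths.

Section Cost.
Variables (V : finType) (R : realType) (E : {set V * V}) (vs vt : V) (Lt : R).
Hypothesis Lt_ge0 : 0 <= Lt.

Lemma cost_le (x : V * V -> R) b : 0 <= b ->
  (forall p, is_path E vs vt p -> path_prob x vs p <= b) -> cost E vs vt Lt x <= Lt * b.
Proof.
move=> b_ge0 prob_le; rewrite /cost ler_wpM2l //.
by apply: bigmax_le => // k _; apply: bigmax_le => // t; apply: prob_le.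
Qed.

Lemma path_prob_le_cost (x : V * V -> R) p :
  is_path E vs vt p -> Lt * path_prob x vs p <= cost E vs vt Lt x.
Proof.
move=> pp; rewrite /cost ler_wpM2l //.
apply: (bigmax_sup (Ordinal (is_path_size pp))) => //.
exact: (@le_bigmax_cond _ _ _ 0 (in_tuple p) _ _ pp).
Qed.

End Cost.

Lemma feasible_uniform (V : finType) (R : realType) (E C : {set V * V}) (B : R) :
  0 <= B -> C \subset E -> (0 < #|C|)%N ->
  feasible E B (fun e => if e \in C then B / #|C|%:R else 0).
Proof.
move=> B_ge0 CE C_gt0; split=> [e _|]; first by case: ifP; rewrite ?divr_ge0 ?ler0n.
rewrite -big_mkcondr /= (eq_bigl (mem C)) => [|e]; last first.
  by rewrite andb_idl // => /(subsetP CE).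
by rewrite sumr_const -[_ *+ _]mulr_natr divfK // pnatr_eq0 -lt0n.
Qed.

Theorem proposition2 (V : finType) (E : {set V * V}) (vs vt : V)
    (R : realType) (B Lt : R) (Ec : {set V * V}) :
  0 <= B -> 0 <= Lt ->
  (exists p, is_path E vs vt p) ->
  min_cut E Ec vs vt ->
  let xstar := fun e : V * V => if e \in Ec then B / (#|Ec|)%:R else 0 in
  feasible E B xstar /\
  forall x : V * V -> R, feasible E B x ->
    cost E vs vt Lt xstar <= cost E vs vt Lt x.
Proof.
move=> B_ge0 Lt_ge0 [p0 p0_path] [Ec_cut Ec_min] xstar.
have Ec_gt0 : (0 < #|Ec|)%N.
  rewrite lt0n cards_eq0; apply/negP => /eqP Ec0.
  by have := Ec_cut.2 p0; rewrite Ec0 setD0 p0_path.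
have xstar_feasible : feasible E B xstar := feasible_uniform B_ge0 Ec_cut.1 Ec_gt0.
split=> // x [x_ge0 x_le_B]; set m := B / #|Ec|%:R.
apply: (@le_trans _ _ (Lt * expR (- m))).
  apply: cost_le => // [|p p_path]; first exact: expR_ge0.
  rewrite path_prob_len ler_expR lerN2.
  have [e e_p e_Ec] := edge_cut_meets_path Ec_cut p_path.
  have xstar_ge0 e' : 0 <= xstar e'.
    by rewrite /xstar; case: ifP; rewrite ?divr_ge0 ?ler0n.
  by apply: le_trans (path_len_ge_edge xstar_ge0 e_p); rewrite /xstar e_Ec.
have [p p_path p_short] := short_path_exists x_ge0 p0_path Ec_min.
apply: le_trans (path_prob_le_cost Lt_ge0 x p_path).
rewrite path_prob_len ler_wpM2l // ler_expR lerN2 /m ler_pdivlMr ?ltr0n // mulrC.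
exact: le_trans p_short x_le_B.
Qed.
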